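(* If $\mathcal G$ is an $n$-dimensional $\mathrm{MD}_{n-2}(n)$-algebra with $\dim\mathcal G^1=2$ and $\mathcal G^1$ contained in the centre of $\mathcal G$, then $n-2$ is divisible by $4$.
   Context: $\mathcal G^1=[\mathcal G,\mathcal G]$. An $\mathrm{MD}_k(n)$-algebra is an $n$-dimensional real solvable Lie algebra all of whose non-trivial coadjoint orbits (for its connected simply connected Lie group; $\dim\Omega_F=\operatorname{rank}(F([x_i,x_j]))$ for a basis $\{x_i\}$, non-trivial iff $F|_{\mathcal G^1}\ne0$) have dimension $k$. *)

(* A real n-dimensional Lie algebra is given by its structure
   constants c i j = [x_i, x_j] in the basis x_0..x_{n-1} of R^n (row vectors). *)
From HB Require Import structures.
From mathcomp Require Import all_boot all_order all_algebra.
From mathcomp Require Import reals.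
Set Implicit Arguments. Unset Strict Implicit. Unset Printing Implicit Defensive.
Import Order.TTheory GRing.Theory Num.Theory.
Local Open Scope ring_scope.

Section LieDefs.
Variables (R : realType) (n : nat).
Variable c : 'I_n -> 'I_n -> 'rV[R]_n.

Definition lie_bracket (x y : 'rV[R]_n) : 'rV[R]_n :=
  \sum_(i < n) \sum_(j < n) (x 0 i * y 0 j) *: c i j.

Definition is_lie_algebra : Prop :=
  (forall x : 'rV[R]_n, lie_bracket x x = 0) /\
  (forall x y z : 'rV[R]_n,
      lie_bracket x (lie_bracket y z) + lie_bracket y (lie_bracket z x)
      + lie_bracket z (lie_bracket x y) = 0).

Definition derived_mx (S : 'M[R]_n) : 'M[R]_n :=
  (\sum_(i < n) \sum_(j < n) <<lie_bracket (row i S) (row j S)>>)%MS.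

Definition G1 : 'M[R]_n := derived_mx 1%:M.

Definition is_solvable : Prop :=
  exists k : nat, iter k derived_mx 1%:M = 0.

Definition orbit_form (F : 'cV[R]_n) : 'M[R]_n :=
  \matrix_(i < n, j < n) (c i j *m F) 0 0.

Definition orbit_dim (F : 'cV[R]_n) : nat := \rank (orbit_form F).

Definition nontrivial_form (F : 'cV[R]_n) : Prop := G1 *m F != 0.

Definition is_MD (k : nat) : Prop :=
  is_lie_algebra /\ is_solvable /\
  forall F : 'cV[R]_n, nontrivial_form F -> orbit_dim F = k.

Definition derived_in_center : Prop :=
  forall v : 'rV[R]_n, (v <= G1)%MS ->
    forall y : 'rV[R]_n, lie_bracket v y = 0.

End LieDefs.

(* In a basis whose first two vectors span G^1, centrality of G^1 puts it in
   the kernel of every orbit form, which therefore reduces to a skew block W_F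
   of size n - 2; the MD condition makes W_F invertible whenever F does not
   vanish on G^1.  For the two forms F_x, F_y dual to the basis of G^1, every
   combination F_x + t F_y is non-trivial, so p(t) = det (W_x + t W_y) is a real
   polynomial of degree n - 2 without real roots.  Being the determinant of a
   skew matrix over R(t), p is a square (u/v)^2 of a rational function; once
   the common real roots of u and v are cancelled, u and v have no real roots,
   hence even degree, and deg p = 2 (deg u - deg v) is divisible by 4. *)

From HB Require Import structures.
From mathcomp Require Import all_boot all_order all_algebra.
From mathcomp Require Import reals polyrcf perm.
From Stdlib Require Import Classical.
From mathcomp Require Import zify.
Set Implicit Arguments. Unset Strict Implicit. Unset Printing Implicit Defensive.
Import Order.TTheory GRing.Theory Num.Theory.
Local Open Scope ring_scope.

Section RootlessPoly.
Variable R : rcfType.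
Implicit Types p u v : {poly R}.

Lemma odd_size_rootless p : (forall t, ~~ root p t) -> odd (size p).
Proof. by move=> hp; apply/negPn/negP => /odd_poly_root [t]; apply/negP. Qed.

Lemma root_sqr p t : root (p ^+ 2) t = root p t.
Proof. exact: root_exp (mulrC _ _) _. Qed.

Lemma sq_eq_divXsubC p u v t : ~~ root p t -> root v t -> u ^+ 2 = p * v ^+ 2 ->
  exists u1 v1, [/\ u = u1 * ('X - t%:P), v = v1 * ('X - t%:P) & u1 ^+ 2 = p * v1 ^+ 2].
Proof.
move=> pt /factor_theorem [v1 ->] e.
have : root (u ^+ 2) t by rewrite e rootM root_sqr rootM root_XsubC eqxx !orbT.
rewrite root_sqr => /factor_theorem [u1 eu]; exists u1, v1; split=> //.
apply: (@mulIf _ (('X - t%:P) ^+ 2)); first by rewrite expf_eq0 polyXsubC_eq0.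
by rewrite -exprMn -eu e exprMn mulrA.
Qed.

Lemma sq_eq_rootless p u v : (forall t, ~~ root p t) -> v != 0 ->
  u ^+ 2 = p * v ^+ 2 ->
  exists u' v', [/\ u' ^+ 2 = p * v' ^+ 2, forall t, ~~ root u' t & forall t, ~~ root v' t].
Proof.
move=> hp; elim: {v}(size v) {-2}v (leqnn (size v)) u => [|k IH] v szv u v0 e.
  by move: v0; rewrite -size_poly_eq0 -leqn0 szv.
have [[t vt]|v_rootless] := classic (exists t, root v t); last first.
  have hv t : ~~ root v t by apply/negP => vt; apply: v_rootless; exists t.
  exists u, v; split=> // t; apply: contra (hv t) => ut.
  have : root (p * v ^+ 2) t by rewrite -e root_sqr.
  by rewrite rootM (negPf (hp t)) root_sqr.
have [u1 [v1 [_ ev e1]]] := sq_eq_divXsubC (hp t) vt e.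
have v10 : v1 != 0 by apply: contraNneq v0 => v10; rewrite ev v10 mul0r.
apply: (IH v1 _ u1) => //; move: szv; rewrite ev size_mul ?polyXsubC_eq0 //.
by rewrite size_XsubC addn2.
Qed.

Lemma rootless_neq0 p : (forall t, ~~ root p t) -> p != 0.
Proof. by move=> hp; apply: contraNneq (hp 0) => ->; exact: root0. Qed.

Lemma even_deg_rootless p : (forall t, ~~ root p t) -> (2 %| (size p).-1)%N.
Proof.
move=> hp; move: (odd_size_rootless hp) (rootless_neq0 hp).
by rewrite -size_poly_eq0 dvdn2; case: (size p).
Qed.

Lemma dvdn4_size_sq_ratio p u v : (forall t, ~~ root p t) -> v != 0 ->
  u ^+ 2 = p * v ^+ 2 -> (4 %| (size p).-1)%N.
Proof.
move=> hp v0 e; have [u' [v' [e' hu hv]]] := sq_eq_rootless hp v0 e.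
have p0 := rootless_neq0 hp; have v'0 := rootless_neq0 hv.
have sv2 : (0 < size (v' ^+ 2))%N by rewrite size_poly_gt0 expf_neq0.
have := congr1 (fun q : {poly R} => (size q).-1) e'.
rewrite /= size_exp size_mul ?expf_neq0 // -(prednK sv2) size_exp.
rewrite -(prednK (_ : 0 < size p)%N) ?size_poly_gt0 // addnS /=.
move: (even_deg_rootless hu) (even_deg_rootless hv).
move: (size u').-1 (size v').-1 (size p).-1 => a b q; lia.
Qed.
End RootlessPoly.

Section SkewDeterminant.
Variable K : fieldType.
Hypothesis two_neq0 : (2%:R : K) != 0.

Lemma det_block_schur n1 n2 (A : 'M[K]_n1) (B : 'M[K]_(n1, n2)) C D :
  A \in unitmx -> \det (block_mx A B C D) = \det A * \det (D - C *m invmx A *m B).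
Proof.
move=> uA; have -> : block_mx A B C D = block_mx 1%:M 0 (C *m invmx A) 1%:M *m
    block_mx A B 0 (D - C *m invmx A *m B).
  by rewrite mulmx_block !mul1mx !mul0mx !addr0 -mulmxA mulVmx // mulmx1 addrC subrK.
by rewrite det_mulmx det_lblock det_ublock !det1 !mul1r.
Qed.

Lemma skew_mx_diag0 N (W : 'M[K]_N) i : W^T = - W -> W i i = 0.
Proof.
move=> /(congr1 (fun M : 'M_N => M i i)) /eqP; rewrite !mxE -subr_eq0 opprK.
by rewrite -mulr2n -mulr_natr mulf_eq0 (negPf two_neq0) orbF => /eqP.
Qed.

Lemma det_skew_mx2 (A : 'M[K]_2) : A^T = - A -> \det A = A 0 1 ^+ 2.
Proof.
move=> skA; have A10 : A 1 0 = - A 0 1 by have := congr1 (fun M : 'M_2 => M 0 1) skA; rewrite !mxE.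
rewrite (expand_det_row _ 0) !big_ord_recl big_ord0 addr0 skew_mx_diag0 // mul0r add0r.
rewrite /cofactor det_mx11 !mxE /=.
have -> : lift 0 (0 : 'I_1) = 1 by apply/val_inj.
have -> : lift 1 (0 : 'I_1) = 0 by apply/val_inj.
by rewrite A10 expr1 mulN1r opprK expr2.
Qed.

Lemma skew_mx_schur n1 n2 (A : 'M[K]_n1) (B : 'M[K]_(n1, n2)) C D :
  A \in unitmx -> A^T = - A -> B^T = - C -> C^T = - B -> D^T = - D ->
  (D - C *m invmx A *m B)^T = - (D - C *m invmx A *m B).
Proof.
move=> uA skA skB skC skD; have invN : invmx (- A) = - invmx A.
  by rewrite -!scaleN1r invmxZ ?unitmxZ ?unitrN1 // invrN1.
rewrite raddfB /= !trmx_mul skD skB skC trmx_inv skA invN.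
by rewrite !(mulmxN, mulNmx) !opprK opprB addrC mulmxA.
Qed.

Lemma det_skew_block_sqr N (W : 'M[K]_(2 + N)) :
  (forall S : 'M[K]_N, S^T = - S -> exists d, \det S = d ^+ 2) ->
  W^T = - W -> W (lshift N 0) (lshift N 1) != 0 -> exists d, \det W = d ^+ 2.
Proof.
move=> IH; rewrite -[W]submxK tr_block_mx opp_block_mx block_mxEul.
move: (ulsubmx W) (ursubmx W) (dlsubmx W) (drsubmx W) => A B C D.
move=> /eq_block_mx [skA skC skB skD] A01.
have uA : A \in unitmx by rewrite unitmxE unitfE det_skew_mx2 // expf_neq0.
have [d dd] := IH _ (skew_mx_schur uA skA skB skC skD).
by exists (A 0 1 * d); rewrite det_block_schur // det_skew_mx2 // dd exprMn.
Qed.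

Lemma det_skew_mx_sqr N (W : 'M[K]_N) : W^T = - W -> exists d, \det W = d ^+ 2.
Proof.
elim/ltn_ind: N W => -[|[|N]] IH W skW.
- by exists 1; rewrite det_mx00 expr1n.
- by exists 0; rewrite det_mx11 skew_mx_diag0 // expr0n.
have [j Wj|row0] := pickP (fun j => W 0 j != 0); last first.
  exists 0; rewrite (expand_det_row _ 0) big1 ?expr0n // => k _.
  by move: (row0 k) => /negbFE/eqP ->; rewrite mul0r.
pose s : {perm 'I_N.+2} := tperm 1 j.
pose W1 := perm_mx s *m W *m (perm_mx s)^T.
have dW1 : \det W1 = \det W.
  by rewrite !det_mulmx det_tr det_perm mulrC mulrA -expr2 sqrr_sign mul1r.
have skW1 : W1^T = - W1 by rewrite /W1 !trmx_mul trmxK skW mulNmx mulmxN mulmxA.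
have W1_01 : W1 0 1 = W 0 j.
  rewrite /W1 -row_permE tr_perm_mx -col_permE !mxE tpermL tpermD //.
  by apply: contraNneq Wj => <-; rewrite skew_mx_diag0.
rewrite -dW1; apply: (det_skew_block_sqr (W := W1)) => //; first exact: IH.
by rewrite -W1_01 in Wj; congr (_ != _): Wj; congr (W1 _ _); apply/val_inj.
Qed.
End SkewDeterminant.

Lemma frac_mul_denom (R : idomainType) (x : {fraction R}) :
  exists u v : R, v != 0 /\ x * tofrac v = tofrac u.
Proof.
elim/quotW: x => r; exists \n_r, \d_r; split; first exact: denom_ratioP.
unlock tofrac; rewrite /GRing.mul /= !piE; apply/eqmodP.
rewrite /= FracField.equivfE /FracField.mulf.
by rewrite !numden_Ratio ?mulf_neq0 ?oner_neq0 ?denom_ratioP // !mulr1 mulrC.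
Qed.

Section SkewPencil.
Variables (R : rcfType) (N : nat) (X Y : 'M[R]_N).

Definition pencil_mx : 'M[{poly R}]_N := map_mx polyC X + 'X *: map_mx polyC Y.

Lemma horner_det_pencil t : (\det pencil_mx).[t] = \det (X + t *: Y).
Proof.
rewrite -[LHS]/(horner_eval t _) -det_map_mx; congr (\det _).
by apply/matrixP => i j; rewrite /pencil_mx !mxE /= horner_evalE !hornerE.
Qed.

Lemma size_det_pencil : \det Y != 0 -> size (\det pencil_mx) = N.+1.
Proof.
move=> dY; have uY : Y \in unitmx by rewrite unitmxE unitfE.
have -> : pencil_mx = map_mx polyC Y *m char_poly_mx (- (invmx Y *m X)).
  rewrite /pencil_mx /char_poly_mx mulmxBr mul_mx_scalar map_mxN mulmxN opprK.
  by rewrite -map_mxM mulmxA mulmxV // mul1mx addrC.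
by rewrite det_mulmx det_map_mx size_Cmul // size_char_poly.
Qed.

Hypotheses (skX : X^T = - X) (skY : Y^T = - Y).

Lemma pencil_mx_skew : pencil_mx^T = - pencil_mx.
Proof.
by rewrite /pencil_mx raddfD /= linearZ /= !map_trmx skX skY !map_mxN scalerN opprD.
Qed.

Lemma det_pencil_sq_ratio : exists u v : {poly R},
  v != 0 /\ u ^+ 2 = \det pencil_mx * v ^+ 2.
Proof.
pose Z := map_mx (@tofrac {poly R}) pencil_mx.
have skZ : Z^T = - Z by rewrite /Z map_trmx pencil_mx_skew map_mxN.
have two_neq0 : (2%:R : {fraction {poly R}}) != 0.
  by rewrite -(rmorph_nat (@tofrac {poly R})) tofrac_eq0 -polyC_natr polyC_eq0 pnatr_eq0.
have [d dd] := det_skew_mx_sqr two_neq0 skZ.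
have [u [v [v0 e]]] := frac_mul_denom d.
exists u, v; split=> //; apply/eqP; rewrite -tofrac_eq; apply/eqP.
by rewrite !rmorphXn rmorphM /= -e exprMn -dd /Z det_map_mx rmorphXn.
Qed.

Lemma dvdn4_skew_pencil : \det Y != 0 -> (forall t, \det (X + t *: Y) != 0) ->
  (4 %| N)%N.
Proof.
move=> dY hX; have [u [v [v0 e]]] := det_pencil_sq_ratio.
have rootless t : ~~ root (\det pencil_mx) t by rewrite rootE horner_det_pencil.
by have := dvdn4_size_sq_ratio rootless v0 e; rewrite size_det_pencil.
Qed.
End SkewPencil.

Section StructureConstants.
Variables (R : realType) (n : nat) (c : 'I_n -> 'I_n -> 'rV[R]_n).

Lemma lie_bracketDl x y z :
  lie_bracket c (x + y) z = lie_bracket c x z + lie_bracket c y z.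
Proof.
rewrite /lie_bracket -big_split; apply: eq_bigr => i _.
by rewrite -big_split; apply: eq_bigr => j _; rewrite !mxE mulrDl scalerDl.
Qed.

Lemma lie_bracketDr x y z :
  lie_bracket c x (y + z) = lie_bracket c x y + lie_bracket c x z.
Proof.
rewrite /lie_bracket -big_split; apply: eq_bigr => i _.
by rewrite -big_split; apply: eq_bigr => j _; rewrite !mxE mulrDr scalerDl.
Qed.

Lemma lie_bracket_delta_r v k : lie_bracket c v (delta_mx 0 k) = \sum_i v 0 i *: c i k.
Proof.
apply: eq_bigr => i _; rewrite (bigD1 k) //= big1 ?addr0 => [|j jk].
  by rewrite mxE !eqxx mulr1.
by rewrite mxE (negPf jk) andbF mulr0 scale0r.
Qed.

Lemma lie_bracket_delta i j : lie_bracket c (delta_mx 0 i) (delta_mx 0 j) = c i j.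
Proof.
rewrite lie_bracket_delta_r (bigD1 i) //= big1 ?addr0 => [|k ki].
  by rewrite mxE !eqxx scale1r.
by rewrite mxE (negPf ki) scale0r.
Qed.

Lemma nontrivial_form_sub (F : 'cV[R]_n) (v : 'rV[R]_n) : (v <= G1 c)%MS -> v *m F != 0 -> nontrivial_form c F.
Proof.
by case/submxP=> w ->; rewrite -mulmxA; apply: contraNneq => ->; rewrite mulmx0.
Qed.

Hypothesis Hlie : is_lie_algebra c.

Lemma structure_const_diag i : c i i = 0.
Proof. by rewrite -lie_bracket_delta Hlie.1. Qed.

Lemma structure_const_skew i j : c j i = - c i j.
Proof.
have := Hlie.1 (delta_mx 0 i + delta_mx 0 j).
rewrite !(lie_bracketDl, lie_bracketDr) !lie_bracket_delta !structure_const_diag.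
by rewrite add0r addr0 => /eqP; rewrite addr_eq0 => /eqP ->; rewrite opprK.
Qed.

Lemma orbit_form_skew F : (orbit_form c F)^T = - orbit_form c F.
Proof.
apply/matrixP => i j; rewrite !mxE -sumrN; apply: eq_bigr => k _.
by rewrite structure_const_skew !mxE mulNr.
Qed.

Lemma orbit_formD F1 F2 t :
  orbit_form c (F1 + t *: F2) = orbit_form c F1 + t *: orbit_form c F2.
Proof.
apply/matrixP => i j; rewrite !mxE big_distrr -big_split; apply: eq_bigr => k _.
by rewrite !mxE mulrDr mulrCA.
Qed.

Hypothesis Hc : derived_in_center c.

Lemma orbit_form_center F (v : 'rV[R]_n) : (v <= G1 c)%MS -> v *m orbit_form c F = 0.
Proof.
move=> vG; apply/rowP => k.
transitivity ((lie_bracket c v (delta_mx 0 k) *m F) 0 0); last by rewrite Hc // mul0mx !mxE.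
rewrite lie_bracket_delta_r mulmx_suml summxE !mxE.
by apply: eq_bigr => i _; rewrite -scalemxAl !mxE.
Qed.
End StructureConstants.

Section AdaptedBasis.
Variables (R : realType) (m : nat) (c : 'I_(2 + m) -> 'I_(2 + m) -> 'rV[R]_(2 + m)).
Hypotheses (Hlie : is_lie_algebra c) (Hc : derived_in_center c).
Variable E : 'M[R]_(2 + m).
Hypotheses (uE : E \in unitmx) (EG1 : forall i : 'I_2, (row (lshift m i) E <= G1 c)%MS).

Definition reduced_form F : 'M[R]_m := drsubmx (E *m orbit_form c F *m E^T).

Lemma adapted_orbit_form F :
  E *m orbit_form c F *m E^T = block_mx 0 0 0 (reduced_form F).
Proof.
set M := E *m _ *m _.
have skM : M^T = - M.
  by rewrite /M !trmx_mul trmxK orbit_form_skew // mulNmx mulmxN mulmxA.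
have uM : usubmx M = 0.
  by apply/row_matrixP => i; rewrite row_usubmx !row_mul orbit_form_center // !mul0mx row0.
move: skM; rewrite -[M]submxK tr_block_mx opp_block_mx => /eq_block_mx [_ _ urM' _].
have [ulM urM] : ulsubmx M = 0 /\ ursubmx M = 0.
  by rewrite /ulsubmx /ursubmx uM; split; apply/matrixP => i j; rewrite !mxE.
have dlM : dlsubmx M = 0 by apply: oppr_inj; rewrite -urM' urM trmx0 oppr0.
by rewrite /reduced_form -/M ulM urM dlM.
Qed.

Lemma reduced_form_skew F : (reduced_form F)^T = - reduced_form F.
Proof.
have := congr1 trmx (adapted_orbit_form F).
rewrite !trmx_mul trmxK orbit_form_skew // mulNmx mulmxN mulmxA adapted_orbit_form.
by rewrite tr_block_mx !trmx0 opp_block_mx oppr0 => /eq_block_mx [].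
Qed.

Lemma reduced_formD F1 F2 t :
  reduced_form (F1 + t *: F2) = reduced_form F1 + t *: reduced_form F2.
Proof.
rewrite /reduced_form orbit_formD mulmxDr mulmxDl -scalemxAr -scalemxAl.
by apply/matrixP => i j; rewrite !mxE.
Qed.

Lemma rank_reduced_form F : \rank (orbit_form c F) = \rank (reduced_form F).
Proof.
have -> : \rank (reduced_form F) = \rank (E *m orbit_form c F *m E^T).
  by rewrite adapted_orbit_form rank_diag_block_mx mxrank0.
have rfT : row_free E^T by rewrite row_free_unit unitmx_tr.
by rewrite mxrankMfree // -[RHS]mxrank_tr trmx_mul mxrankMfree ?mxrank_tr // row_free_unit.
Qed.

Lemma nontrivial_dual_form (g : 'cV[R]_(2 + m)) (i : 'I_2) :
  g (lshift m i) 0 != 0 -> nontrivial_form c (invmx E *m g).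
Proof.
move=> gi; apply: (nontrivial_form_sub (EG1 i)); apply: contra gi => /eqP.
rewrite mulmxA -row_mul mulmxV // row1 => /matrixP /(_ 0 0).
by rewrite -rowE !mxE => ->.
Qed.
End AdaptedBasis.

Lemma row_ebase_sub (K : fieldType) n (A : 'M[K]_n) (i : 'I_n) :
  (i < \rank A)%N -> (row i (row_ebase A) <= A)%MS.
Proof.
move=> ir; have -> : row i (row_ebase A) = row i (pid_mx (\rank A) *m row_ebase A).
  rewrite row_mul [LHS]rowE; congr (_ *m _); apply/rowP => j; rewrite !mxE.
  by rewrite ir andbT eq_sym.
have -> : pid_mx (\rank A) *m row_ebase A = invmx (col_ebase A) *m A.
  by rewrite -[X in _ = _ *m X]mulmx_ebase -!mulmxA mulKmx ?col_ebase_unit.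
exact: submx_trans (row_sub _ _) (submxMl _ _).
Qed.

Lemma MD_center_rank2_dvdn4 (R : realType) m (c : 'I_(2 + m) -> 'I_(2 + m) -> 'rV[R]_(2 + m)) :
  is_MD c m -> \rank (G1 c) = 2 -> derived_in_center c -> (4 %| m)%N.
Proof.
move=> [Hlie [_ HMD]] r2 Hc.
pose E := row_ebase (G1 c).
have uE : E \in unitmx := row_ebase_unit _.
have EG1 (i : 'I_2) : (row (lshift m i) E <= G1 c)%MS by apply: row_ebase_sub; rewrite r2 /=.
have det_reduced F : nontrivial_form c F -> \det (reduced_form c E F) != 0.
  move/HMD; rewrite /orbit_dim (rank_reduced_form Hlie Hc uE EG1) => rk.
  by rewrite -unitfE -unitmxE -row_free_unit /row_free rk.
pose F_ (i : 'I_2) := invmx E *m delta_mx (lshift m i) (0 : 'I_1).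
have skew i := reduced_form_skew Hlie Hc EG1 (F_ i).
apply: (dvdn4_skew_pencil (skew 0) (skew 1)).
  by apply/det_reduced/(nontrivial_dual_form uE EG1 (i := 1)); rewrite mxE !eqxx oner_neq0.
move=> t; rewrite -reduced_formD; apply/det_reduced.
rewrite scalemxAr -mulmxDr; apply: (nontrivial_dual_form uE EG1 (i := 0)).
by rewrite !mxE !eqxx (_ : lshift m 0 == lshift m 1 = false) // mulr0 addr0 oner_neq0.
Qed.

Theorem corollary4p6 (R : realType) (n : nat) (c : 'I_n -> 'I_n -> 'rV[R]_n) :
  is_MD c (n - 2) ->
  \rank (G1 c) = 2%N ->
  derived_in_center c ->
  (4 %| n - 2)%N.
Proof.
case: n c => [|[|m]] c HMD r2 Hc; try by move: (rank_leq_row (G1 c)); rewrite r2.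
by rewrite !subSS subn0 in HMD *; apply: MD_center_rank2_dvdn4 HMD r2 Hc.
Qed.
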